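(* Let $\varphi$ be any forecasting system (not necessarily computable or non-degenerate) and $\omega\in\Omega$. If $\omega$ is Martin-Löf test random for $\varphi$, then $\omega$ is Martin-Löf random for $\varphi$.
   Context: Notation: $\mathbb N_0=\{0,1,\dots\}$; $\Omega=\{0,1\}^{\mathbb N}$; $\mathbb S$ finite binary strings, $\square$ empty string, $\omega^n$ first $n$ entries of $\omega$; $[s]=\{\omega:\omega^{|s|}=s\}$, $[A]=\bigcup_{s\in A}[s]$; for $A\subseteq\mathbb N_0\times\mathbb S$, $A_n=\{s:(n,s)\in A\}$. $\mathcal I$: nonempty closed subintervals of $[0,1]$; $\overline E_I(f)=\max_{p\in I}[pf(1)+(1-p)f(0)]$. Forecasting system: any map $\varphi:\mathbb S\to\mathcal I$. Supermartingale for $\varphi$: $M:\mathbb S\to\mathbb R$ with $\overline E_{\varphi(s)}(M(s\,\cdot))\le M(s)$ for all $s$; test supermartingale: non-negative with $M(\square)=1$. $\overline P_\varphi(G)=\inf\{M(\square):M\text{ supermartingale for }\varphi,\ \liminf_nM(\omega^n)\ge\mathbb 1_G(\omega)\ \forall\omega\}$. A real map $r:\mathbb S\to\mathbb R$ is lower semicomputable if there is a recursive $q:\mathbb S\times\mathbb N_0\to\mathbb Q$, non-decreasing in the second argument, with $q(s,n)\to r(s)$. $\omega$ is Martin-Löf random for $\varphi$ if every lower semicomputable test supermartingale $T$ for $\varphi$ satisfies $\sup_nT(\omega^n)<\infty$. A Martin-Löf test for $\varphi$ is a recursively enumerable $A\subseteq\mathbb N_0\times\mathbb S$ with $\overline P_\varphi([A_n])\le2^{-n}$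 for all $n$; $\omega$ is Martin-Löf test random for $\varphi$ if $\omega\notin\bigcap_n[A_n]$ for every Martin-Löf test $A$ for $\varphi$. *)

From HB Require Import structures.
From mathcomp Require Import all_boot all_order all_algebra.
From mathcomp Require Import all_classical all_reals all_analysis.
Set Implicit Arguments. Unset Strict Implicit. Unset Printing Implicit Defensive.
Import Order.TTheory GRing.Theory Num.Theory.
Import numFieldNormedType.Exports.
Local Open Scope classical_set_scope.
Local Open Scope ring_scope.

Inductive prog : Type :=
| PZero : prog
| PSucc : prog
| PProj : nat -> prog
| PComp : prog -> list prog -> prog
| PRec  : prog -> prog -> prog
| PMu   : prog -> prog.

Inductive eval : prog -> seq nat -> nat -> Prop :=
| ev_zero v : eval PZero v 0
| ev_succ x v : eval PSucc (x :: v) x.+1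
| ev_proj i v : (i < size v)%N -> eval (PProj i) v (nth 0%N v i)
| ev_comp f gs v ws y : evals gs v ws -> eval f ws y -> eval (PComp f gs) v y
| ev_rec0 f g v y : eval f v y -> eval (PRec f g) (0%N :: v) y
| ev_recS f g n v y z : eval (PRec f g) (n :: v) y -> eval g (n :: y :: v) z ->
    eval (PRec f g) (n.+1 :: v) z
| ev_mu f v n : eval f (n :: v) 0 ->
    (forall m, (m < n)%N -> exists k, eval f (m :: v) k.+1) -> eval (PMu f) v n
with evals : list prog -> seq nat -> seq nat -> Prop :=
| evs_nil v : evals nil v nil
| evs_cons g gs v w ws : eval g v w -> evals gs v ws -> evals (g :: gs) v (w :: ws).

Definition recursive_fun (F : nat -> nat) : Prop :=
  exists p : prog, forall n, eval p [:: n] (F n).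

Definition pair_code (a b : nat) : nat := (2 ^ a * (2 * b).+1).-1.
Fixpoint str_code (s : seq bool) : nat :=
  match s with nil => 0%N | b :: t => (2 * str_code t + 1 + b)%N end.
Definition int_code (z : int) : nat :=
  match z with Posz n => (2 * n)%N | Negz n => (2 * n).+1 end.
Definition rat_code (q : rat) : nat := pair_code (int_code (numq q)) (int_code (denq q)).

Definition recursive_SNQ (q : seq bool -> nat -> rat) : Prop :=
  exists F : nat -> nat, recursive_fun F /\
    forall s n, F (pair_code (str_code s) n) = rat_code (q s n).

Definition rec_enum (A : nat -> seq bool -> Prop) : Prop :=
  exists p : prog, forall n s, A n s <-> exists y, eval p [:: pair_code n (str_code s)] y.

Definition Omega := nat -> bool.

Definition prefix (w : Omega) (n : nat) : seq bool := mkseq w n.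

Definition cyl (s : seq bool) : set Omega := [set w | prefix w (size s) = s].
Definition cylA (A : nat -> seq bool -> Prop) (n : nat) : set Omega :=
  [set w | exists s, A n s /\ cyl s w].

Section Forecast.
Variable R : realType.

(* A forecasting system maps each string to a nonempty closed subinterval
   [lo, hi] of [0,1], given as the pair (lo, hi). *)
Definition forecasting_system (phi : seq bool -> R * R) : Prop :=
  forall s, 0 <= (phi s).1 /\ (phi s).1 <= (phi s).2 /\ (phi s).2 <= 1.

Definition upper_exp (I : R * R) (f : bool -> R) : R :=
  sup [set p * f true + (1 - p) * f false | p in `[I.1, I.2]%classic].

Definition supermartingale (phi : seq bool -> R * R) (M : seq bool -> R) : Prop :=
  forall s, upper_exp (phi s) (fun b => M (rcons s b)) <= M s.

Definition test_supermartingale (phi : seq bool -> R * R) (M : seq bool -> R) : Prop :=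
  supermartingale phi M /\ (forall s, 0 <= M s) /\ M [::] = 1.

Definition upper_prob (phi : seq bool -> R * R) (G : set Omega) : \bar R :=
  ereal_inf [set (M [::])%:E | M in
    [set M | supermartingale phi M /\
       forall w : Omega, (((w \in G)%:R)%:E <= limn_einf (fun n => (M (prefix w n))%:E))%E]].

Definition lower_semicomputable (r : seq bool -> R) : Prop :=
  exists q : seq bool -> nat -> rat, recursive_SNQ q /\
    (forall s n, q s n <= q s n.+1) /\
    (forall s, (fun n => (ratr (q s n) : R)) @ \oo --> r s).

Definition ML_random (phi : seq bool -> R * R) (w : Omega) : Prop :=
  forall T : seq bool -> R, test_supermartingale phi T -> lower_semicomputable T ->
    exists C : R, forall n, T (prefix w n) <= C.

Definition ML_test (phi : seq bool -> R * R) (A : nat -> seq bool -> Prop) : Prop :=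
  rec_enum A /\ forall n, (upper_prob phi (cylA A n) <= (2%:R ^- n)%:E)%E.

Definition ML_test_random (phi : seq bool -> R * R) (w : Omega) : Prop :=
  forall A, ML_test phi A -> ~ (forall n, cylA A n w).

End Forecast.

(* Let T be a lower semicomputable test supermartingale for phi, approximated
   from below by recursive rationals q(s, m), and suppose T is unbounded along
   omega.  Put A_n = { s | exists m, q(s, m) > 2^n }.
   - A is recursively enumerable: membership is semidecided by a mu-search
     over a bounded arithmetic condition.  Ville's inequality, realised by the supermartingale 2^-n T
     stopped at the first time T exceeds 2^n, bounds the upper probability of
     [A_n] by 2^-n; so A is a Martin-Löf test.
   - Unboundedness of T along omega puts omega in every [A_n], contradicting
     Martin-Löf test randomness. *)
From Stdlib Require List.
From HB Require Import structures.
From mathcomp Require Import all_boot all_order all_algebra.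
From mathcomp Require Import all_classical all_reals all_analysis.
From mathcomp Require Import zify.
Set Implicit Arguments. Unset Strict Implicit. Unset Printing Implicit Defensive.
Import Order.TTheory GRing.Theory Num.Theory numFieldNormedType.Exports.

Fixpoint prog_nested_ind (P : prog -> Prop)
  (H0 : P PZero) (H1 : P PSucc) (H2 : forall i, P (PProj i))
  (H3 : forall f gs, P f -> List.Forall P gs -> P (PComp f gs))
  (H4 : forall f g, P f -> P g -> P (PRec f g))
  (H5 : forall f, P f -> P (PMu f)) (p : prog) {struct p} : P p :=
  let IH := prog_nested_ind H0 H1 H2 H3 H4 H5 in
  match p with
  | PZero => H0 | PSucc => H1 | PProj i => H2 i
  | PComp f gs => H3 f gs (IH f)
      ((fix all_gs (l : list prog) : List.Forall P l :=
         match l with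
         | nil => List.Forall_nil _
         | g :: l' => List.Forall_cons _ (IH g) (all_gs l')
         end) gs)
  | PRec f g => H4 f g (IH f) (IH g)
  | PMu f => H5 f (IH f)
  end.

Definition deterministic (p : prog) : Prop :=
  forall v y y', eval p v y -> eval p v y' -> y = y'.

Lemma evals_deterministic gs v : List.Forall deterministic gs ->
  forall ws ws', evals gs v ws -> evals gs v ws' -> ws = ws'.
Proof.
elim=> [|g l det_g _ IH] ws ws' E E'; first by inversion E; inversion E'.
inversion E; inversion E'; subst.
match goal with A : eval g v _, B : eval g v _, C : evals l v _, D : evals l v _ |- _ =>
  by rewrite (det_g _ _ _ A B) (IH _ _ C D) end.
Qed.

(* Every program computes a partial function.  For [PMu], two distinct
   minimisation results would make the smaller one both a zero and a
   nonzero value. *)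
Lemma eval_deterministic p : deterministic p.
Proof.
elim/prog_nested_ind: p.
- by move=> v y y' E E'; inversion E; inversion E'.
- by move=> v y y' E E'; inversion E; inversion E'; subst; congruence.
- by move=> i v y y' E E'; inversion E; inversion E'.
- move=> f gs IHf IHgs v y y' E E'; inversion E; inversion E'; subst.
  match goal with A : evals gs v ?a, B : evals gs v ?b, C : eval f ?a y, D : eval f ?b y' |- _ =>
    have ws_eq := evals_deterministic IHgs A B; subst; exact: IHf C D end.
- move=> f g IHf IHg v y y' E.
  have [n [v' v_eq]] : exists n v', v = n :: v' by inversion E; eauto.
  subst v.
  elim: n y y' E => [|n IH] y y' E E'; inversion E; inversion E'; subst.
    match goal with A : eval f v' _, B : eval f v' _ |- _ => exact: IHf A B end.
  match goal with A : eval (PRec f g) _ ?a, B : eval (PRec f g) _ ?b |- _ =>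
    have rec_eq := IH _ _ A B; subst end.
  match goal with A : eval g _ y, B : eval g _ y' |- _ => exact: IHg A B end.
- move=> f IHf v y y' E E'; inversion E as [| | | | | |? ? ? f0 below]; subst.
  inversion E' as [| | | | | |? ? ? f0' below']; subst.
  case: (ltngtP y y') => // lt_yy'.
  + by have [k /(IHf _ _ _ f0)] := below' _ lt_yy'.
  + by have [k /(IHf _ _ _ f0')] := below _ lt_yy'.
Qed.

Definition ADD : prog := PRec (PProj 0) (PComp PSucc [:: PProj 1]).
Definition MUL : prog := PRec PZero (PComp ADD [:: PProj 2; PProj 1]).
Definition PRED : prog := PRec PZero (PProj 0).
Definition SUBR : prog := PRec (PProj 0) (PComp PRED [:: PProj 1]).
Definition POW2 : prog := PRec (PComp PSucc [:: PZero]) (PComp ADD [:: PProj 1; PProj 1]).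

Lemma evals1 g v w : eval g v w -> evals [:: g] v [:: w].
Proof. by move=> E; apply: evs_cons E (evs_nil _). Qed.

Lemma evals2 g h v w u : eval g v w -> eval h v u -> evals [:: g; h] v [:: w; u].
Proof. by move=> Eg Eh; apply: evs_cons Eg (evals1 Eh). Qed.

Lemma ADD_ok n y : eval ADD [:: n; y] (n + y)%N.
Proof.
elim: n => [|n IH]; first exact: (ev_rec0 _ (@ev_proj 0 [:: y] _)).
apply: ev_recS IH _; apply: ev_comp (evals1 (@ev_proj 1 [:: n; n + y; y] _)) _ => //.
exact: ev_succ.
Qed.

Lemma MUL_ok n y : eval MUL [:: n; y] (n * y)%N.
Proof.
elim: n => [|n IH]; first exact: ev_rec0 (ev_zero _).
apply: ev_recS IH _; rewrite mulSn.
apply: ev_comp (evals2 (@ev_proj 2 [:: n; n * y; y] _) (@ev_proj 1 [:: n; n * y; y] _)) _ => //.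
exact: ADD_ok.
Qed.

Lemma PRED_ok n : eval PRED [:: n] n.-1.
Proof.
elim: n => [|n IH]; first exact: ev_rec0 (ev_zero _).
exact: ev_recS IH (@ev_proj 0 [:: n; n.-1] isT).
Qed.

Lemma SUBR_ok n x : eval SUBR [:: n; x] (x - n)%N.
Proof.
elim: n => [|n IH]; first by rewrite subn0; exact: (ev_rec0 _ (@ev_proj 0 [:: x] _)).
apply: ev_recS IH _; rewrite subnS.
apply: ev_comp (evals1 (@ev_proj 1 [:: n; x - n; x] _)) _ => //.
exact: PRED_ok.
Qed.

Lemma POW2_ok n : eval POW2 [:: n] (2 ^ n)%N.
Proof.
elim: n => [|n IH].
  by apply: ev_rec0; apply: ev_comp (evals1 (ev_zero _)) _; exact: ev_succ.
apply: ev_recS IH _; rewrite expnS mul2n -addnn.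
apply: ev_comp (evals2 (@ev_proj 1 [:: n; 2 ^ n] _) (@ev_proj 1 [:: n; 2 ^ n] _)) _ => //.
exact: ADD_ok.
Qed.

(* Expressions over de Bruijn variables; [ECall p f a] applies a unary
   function [f] computed by the program [p], and [EBprod b e] is the product
   of [e] over a fresh variable ranging over [0, b]. *)
Inductive expr :=
| EVar of nat | EZero | ESucc of expr | EAdd of expr & expr | EMul of expr & expr
| ESub of expr & expr | EPow2 of expr | ECall of prog & (nat -> nat) & expr
| EBprod of expr & expr.

Fixpoint bprod (g : nat -> nat) (n : nat) : nat :=
  if n is n'.+1 then (bprod g n' * g n)%N else g 0%N.

(* A bounded product vanishes iff some factor does: this expresses bounded
   existential quantification over zeros. *)
Lemma bprod_eq0 g n : bprod g n = 0%N <-> exists2 i, (i <= n)%N & g i = 0%N.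
Proof.
elim: n => [|n IH] /=.
  by split=> [g0|[i]]; [exists 0%N | rewrite leqn0 => /eqP ->].
split.
  move/eqP; rewrite muln_eq0 => /orP[/eqP/IH [i le_in gi0]|/eqP gn0].
    by exists i => //; exact: leqW.
  by exists n.+1.
case=> i; rewrite leq_eqVlt => /orP[/eqP ->|lt_in] gi0; apply/eqP; rewrite muln_eq0.
  by rewrite gi0 eqxx orbT.
by apply/orP; left; apply/eqP/IH; exists i.
Qed.

Fixpoint expr_val (e : expr) (v : seq nat) : nat :=
  match e with
  | EVar i => nth 0%N v i
  | EZero => 0%N
  | ESucc a => (expr_val a v).+1
  | EAdd a b => (expr_val a v + expr_val b v)%N
  | EMul a b => (expr_val a v * expr_val b v)%N
  | ESub a b => (expr_val a v - expr_val b v)%N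
  | EPow2 a => (2 ^ expr_val a v)%N
  | ECall _ f a => f (expr_val a v)
  | EBprod b body => bprod (fun i => expr_val body (i :: v)) (expr_val b v)
  end.

Fixpoint expr_wf (k : nat) (e : expr) : Prop :=
  match e with
  | EVar i => (i < k)%N
  | EZero => True
  | ESucc a | EPow2 a => expr_wf k a
  | EAdd a b | EMul a b | ESub a b => expr_wf k a /\ expr_wf k b
  | ECall p f a => (forall n, eval p [:: n] (f n)) /\ expr_wf k a
  | EBprod b body => expr_wf k b /\ expr_wf k.+1 body
  end.

Fixpoint projs (off k : nat) : list prog :=
  if k is k'.+1 then PProj off :: projs off.+1 k' else nil.

Lemma projs_ok v pre : evals (projs (size pre) (size v)) (pre ++ v) v.
Proof.
elim: v pre => [|x v IH] pre /=; first exact: evs_nil.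
apply: evs_cons.
  have := @ev_proj (size pre) (pre ++ x :: v); rewrite nth_cat ltnn subnn; apply.
  by rewrite size_cat /= addnS ltnS leq_addr.
by have := IH (rcons pre x); rewrite size_rcons cat_rcons.
Qed.

(* Compilation of an expression with [k] free variables.  A bounded product
   becomes a primitive recursion accumulating the product of the body. *)
Fixpoint compile (k : nat) (e : expr) : prog :=
  match e with
  | EVar i => PProj i
  | EZero => PZero
  | ESucc a => PComp PSucc [:: compile k a]
  | EAdd a b => PComp ADD [:: compile k a; compile k b]
  | EMul a b => PComp MUL [:: compile k a; compile k b]
  | ESub a b => PComp SUBR [:: compile k b; compile k a]
  | EPow2 a => PComp POW2 [:: compile k a]
  | ECall p _ a => PComp p [:: compile k a]
  | EBprod b body =>
      PComp (PRec (PComp (compile k.+1 body) (PZero :: projs 0 k))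
                  (PComp MUL [:: PProj 1;
                      PComp (compile k.+1 body) (PComp PSucc [:: PProj 0] :: projs 2 k)]))
            (compile k b :: projs 0 k)
  end.

Lemma compile_bprod_ok k body v :
  (forall v, size v = k.+1 -> eval (compile k.+1 body) v (expr_val body v)) ->
  size v = k -> forall n,
  eval (PRec (PComp (compile k.+1 body) (PZero :: projs 0 k))
             (PComp MUL [:: PProj 1;
                 PComp (compile k.+1 body) (PComp PSucc [:: PProj 0] :: projs 2 k)]))
       (n :: v) (bprod (fun i => expr_val body (i :: v)) n).
Proof.
move=> body_ok size_v; elim=> [|n IH] /=.
  apply: ev_rec0; apply: ev_comp (body_ok _ _) => /=; last by rewrite size_v.
  by apply: evs_cons (ev_zero _) _; rewrite -size_v; exact: (projs_ok v [::]).
set acc := bprod _ n; apply: ev_recS IH _.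
apply: ev_comp (evals2 (@ev_proj 1 [:: n, acc & v] _) _) (MUL_ok _ _) => //.
apply: ev_comp (body_ok (n.+1 :: v) _); last by rewrite /= size_v.
apply: evs_cons; last by rewrite -size_v; exact: (projs_ok v [:: n; acc]).
by apply: ev_comp (evals1 (@ev_proj 0 [:: n, acc & v] _)) _ => //; exact: ev_succ.
Qed.

Lemma compile_ok e : forall k v, expr_wf k e -> size v = k ->
  eval (compile k e) v (expr_val e v).
Proof.
elim: e => [i|| a IHa | a IHa b IHb | a IHa b IHb | a IHa b IHb | a IHa | p f a IHa
           | b IHb body IHbody] k v /= wf_e size_v.
- by apply: ev_proj; rewrite size_v.
- exact: ev_zero.
- by apply: ev_comp (evals1 (IHa _ _ wf_e size_v)) _; exact: ev_succ.
- case: wf_e => wf_a wf_b.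
  exact: ev_comp (evals2 (IHa _ _ wf_a size_v) (IHb _ _ wf_b size_v)) (ADD_ok _ _).
- case: wf_e => wf_a wf_b.
  exact: ev_comp (evals2 (IHa _ _ wf_a size_v) (IHb _ _ wf_b size_v)) (MUL_ok _ _).
- case: wf_e => wf_a wf_b.
  exact: ev_comp (evals2 (IHb _ _ wf_b size_v) (IHa _ _ wf_a size_v)) (SUBR_ok _ _).
- exact: ev_comp (evals1 (IHa _ _ wf_e size_v)) (POW2_ok _).
- by case: wf_e => p_f wf_a; apply: ev_comp (evals1 (IHa _ _ wf_a size_v)) _; exact: p_f.
- case: wf_e => wf_b wf_body.
  apply: ev_comp (evs_cons (IHb _ _ wf_b size_v) _) _.
    by rewrite -size_v; exact: (projs_ok v [::]).
  by apply: compile_bprod_ok => // w; exact: IHbody.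
Qed.

Lemma mu_search_halts e x : expr_wf 2 e ->
  (exists y, eval (PMu (compile 2 e)) [:: x] y) <->
  exists z, expr_val e [:: z; x] = 0%N.
Proof.
move=> wf_e; have e_ok z := @compile_ok e 2 [:: z; x] wf_e erefl.
split.
  case=> y E; inversion E as [| | | | | |? ? ? zero_y]; subst; exists y.
  exact: eval_deterministic (e_ok y) zero_y.
case=> z0 /eqP zero_z0.
case: (ex_minnP (ex_intro (fun z => expr_val e [:: z; x] == 0%N) z0 zero_z0)).
move=> n /eqP zero_n min_n; exists n; apply: ev_mu.
  by have := e_ok n; rewrite zero_n.
move=> m lt_mn; exists (expr_val e [:: m; x]).-1.
rewrite prednK; first exact: e_ok.
rewrite lt0n; apply: contraTN lt_mn => /min_n; by rewrite leqNgt.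
Qed.

Definition one : expr := ESucc EZero.
Definition EPair (a b : expr) : expr := ESub (EMul (EPow2 a) (ESucc (EAdd b b))) one.
Definition EDist (a b : expr) : expr := EAdd (ESub a b) (ESub b a).

(* In the environment [d; k; m; c; a; z; x] this vanishes iff
   x = <a, c>, F <c, m> = <2k, 2d> and 2^a d < k; when F codes q, this says
   that x codes (a, s), q(s, m) = k / d in lowest terms and q(s, m) > 2^a. *)
Definition exceed_atom (p : prog) (F : nat -> nat) : expr :=
  EAdd (EAdd (EDist (EVar 6) (EPair (EVar 4) (EVar 3)))
             (EDist (ECall p F (EPair (EVar 3) (EVar 2)))
                    (EPair (EAdd (EVar 1) (EVar 1)) (EAdd (EVar 0) (EVar 0)))))
       (ESub one (ESub (EVar 1) (EMul (EPow2 (EVar 4)) (EVar 0)))).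

Definition exceed_expr (p : prog) (F : nat -> nat) : expr :=
  EBprod (EVar 0) (EBprod (EVar 1) (EBprod (EVar 2) (EBprod (EVar 3)
     (EBprod (EVar 4) (exceed_atom p F))))).

Lemma exceed_atom_eq0 p F d k m c a z x :
  expr_val (exceed_atom p F) [:: d; k; m; c; a; z; x] = 0%N <->
  [/\ x = pair_code a c, F (pair_code c m) = pair_code (2 * k) (2 * d)
    & (2 ^ a * d < k)%N].
Proof.
have pairE u w : (2 ^ u * (w + w).+1 - 1)%N = pair_code u w.
  by rewrite /pair_code subn1 addnn -mul2n.
rewrite /exceed_atom /EDist /= !pairE !mul2n -!addnn.
move: (pair_code a c) (F (pair_code c m)) (pair_code (k + k) (d + d)) (2 ^ a * d)%N.
by move=> X Y Z W; split; [move=> ?; split; lia | case=> *; lia].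
Qed.

Lemma exceed_expr_eq0 p F z x :
  expr_val (exceed_expr p F) [:: z; x] = 0%N <->
  exists a c m k d, [/\ (a <= z)%N, (c <= z)%N, (m <= z)%N, (k <= z)%N & (d <= z)%N] /\
    [/\ x = pair_code a c, F (pair_code c m) = pair_code (2 * k) (2 * d)
    & (2 ^ a * d < k)%N].
Proof.
rewrite /exceed_expr /= bprod_eq0; split.
  case=> a le_a /bprod_eq0 [c le_c /bprod_eq0 [m le_m /bprod_eq0 [k le_k /bprod_eq0 [d le_d]]]].
  by move/(exceed_atom_eq0 p F d k m c a z x); exists a, c, m, k, d.
case=> a [c [m [k [d [[le_a le_c le_m le_k le_d] atom0]]]]].
exists a => //; apply/bprod_eq0; exists c => //; apply/bprod_eq0; exists m => //.
apply/bprod_eq0; exists k => //; apply/bprod_eq0; exists d => //.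
exact/(exceed_atom_eq0 p F d k m c a z x).
Qed.

Lemma pair_code_inj a b a' b' : pair_code a b = pair_code a' b' -> a = a' /\ b = b'.
Proof.
have pos u w : (0 < 2 ^ u * (2 * w).+1)%N by rewrite muln_gt0 expn_gt0.
rewrite /pair_code => E.
have {E pos} : (2 ^ a * (2 * b).+1 = 2 ^ a' * (2 * b').+1)%N.
  by move: E (pos a b) (pos a' b'); move: (2 ^ a * _)%N (2 ^ a' * _)%N => Y Z; lia.
elim: a a' => [|a IH] [|a'].
- by rewrite !expn0 !mul1n; lia.
- by rewrite expn0 mul1n expnS -mulnA; move: (2 ^ a' * _)%N => Y; lia.
- by rewrite expn0 mul1n expnS -mulnA; move: (2 ^ a * _)%N => Y; lia.
- rewrite !expnS -!mulnA => E.
  have [-> ->] // : a = a' /\ b = b'.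
  by apply: IH; move: E; move: (2 ^ a * _)%N (2 ^ a' * _)%N => Y Z; lia.
Qed.

Lemma int_code_even z k : int_code z = (2 * k)%N -> z = Posz k.
Proof. by case: z => n /= E; [congr Posz|]; lia. Qed.

Lemma pow2_lt_ratE n (x : rat) k d : numq x = Posz k -> denq x = Posz d ->
  (((2 ^ n)%:R : rat) < x)%R <-> (2 ^ n * d < k)%N.
Proof.
move=> num_x den_x.
have d_gt0 : (0 < (d%:R : rat))%R by rewrite ltr0n; have := denq_gt0 x; rewrite den_x.
rewrite -(ltr_pM2r d_gt0).
have -> : (x * d%:R = k%:R :> rat)%R by have := numqE x; rewrite num_x den_x !pmulrn => <-.
by rewrite -natrM ltr_nat.
Qed.

Lemma rec_enum_exceed (q : seq bool -> nat -> rat) : recursive_SNQ q ->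
  rec_enum (fun n s => exists m, ((2 ^ n)%:R : rat) < q s m)%R.
Proof.
case=> F [[p p_F] F_q]; exists (PMu (compile 2 (exceed_expr p F))) => n s.
rewrite mu_search_halts; last by rewrite /=; repeat split.
split.
  case=> m q_big; set x := q s m in q_big.
  have x_gt0 : (0 < x)%R by apply: lt_trans q_big; rewrite ltr0n expn_gt0.
  have num_x : numq x = Posz `|numq x|%N by rewrite abszE gtr0_norm // numq_gt0.
  have den_x : denq x = Posz `|denq x|%N by rewrite abszE gtr0_norm // denq_gt0.
  exists (maxn n (maxn (str_code s) (maxn m (maxn `|numq x|%N `|denq x|%N)))).
  apply/exceed_expr_eq0; exists n, (str_code s), m, `|numq x|%N, `|denq x|%N.
  split; first by split; lia.
  split => //; last exact/(pow2_lt_ratE _ num_x den_x).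
  by rewrite F_q -/x /rat_code {1}num_x {1}den_x.
case=> z /exceed_expr_eq0 [a [c [m [k [d [_ [/pair_code_inj [<- <-] F_m lt_kd]]]]]]].
move: F_m; rewrite F_q => /pair_code_inj [/int_code_even num_q /int_code_even den_q].
by exists m; apply/(pow2_lt_ratE _ num_q den_q).
Qed.

Local Open Scope classical_set_scope.
Local Open Scope ring_scope.

Section Bounds.
Variable R : realType.

(* Every convex combination in the interval is below the upper expectation
   (the interval lies in [0, 1], so the set of combinations is bounded). *)
Lemma upper_exp_ge (I : R * R) (f : bool -> R) p :
  0 <= I.1 -> I.2 <= 1 -> I.1 <= p <= I.2 ->
  p * f true + (1 - p) * f false <= upper_exp I f.
Proof.
move=> I1_ge0 I2_le1 /andP[le_p1 le_p2]; apply: ub_le_sup.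
  exists (`|f true| + `|f false|) => _ [r /= /[!in_itv] /= /andP[le_r1 le_r2] <-].
  have r_ge0 : 0 <= r by apply: le_trans le_r1.
  have r_le1 : r <= 1 by apply: le_trans I2_le1.
  rewrite lerD // (le_trans (ler_norm _)) // normrM ger0_norm ?subr_ge0 //.
    by rewrite ler_piMl.
  by rewrite ler_piMl ?subr_ge0 // lerBlDr lerDl.
by exists p => //=; rewrite in_itv /= le_p1 le_p2.
Qed.

Lemma upper_exp_le (I : R * R) (f : bool -> R) c :
  I.1 <= I.2 -> (forall p, I.1 <= p <= I.2 -> p * f true + (1 - p) * f false <= c) ->
  upper_exp I f <= c.
Proof.
move=> le_I le_c; apply: ge_sup.
  by exists (I.1 * f true + (1 - I.1) * f false); exists I.1 => //=; rewrite in_itv /= lexx le_I.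
by move=> _ [r /= /[!in_itv] /= r_in <-]; exact: le_c.
Qed.

Lemma limn_einf_ge (u : nat -> \bar R) (a : \bar R) N :
  (forall k, (N <= k)%N -> (a <= u k)%E) -> (a <= limn_einf u)%E.
Proof.
move=> u_ge; rewrite limn_einf_lim; apply: lime_ge; first exact: is_cvg_einfs.
exists N => // m /= le_Nm; apply: le_ereal_inf_tmp => _ [k /= le_mk <-].
by apply: u_ge; exact: leq_trans le_mk.
Qed.

End Bounds.

Lemma take_prefix (w : Omega) j k : (j <= k)%N -> take j (prefix w k) = prefix w j.
Proof. by move=> le_jk; rewrite /prefix /mkseq -map_take take_iota (minn_idPl le_jk). Qed.

Lemma size_prefix (w : Omega) k : size (prefix w k) = k.
Proof. by rewrite /prefix size_mkseq. Qed.

Lemma take_rcons_le (s : seq bool) b i : (i <= size s)%N -> take i (rcons s b) = take i s.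
Proof. by move=> le_is; rewrite -cats1 takel_cat. Qed.

Lemma iota_rcons (s : seq bool) b :
  iota 0 (size (rcons s b)).+1 = iota 0 (size s).+1 ++ [:: (size s).+1].
Proof. by rewrite size_rcons -addn1 iotaD. Qed.

Section Ville.
Variables (R : realType) (T : seq bool -> R) (c : R).
Hypothesis c_gt0 : 0 < c.

(* The first length at which T exceeds c along s (or [size s].+1 if none). *)
Definition exceed_time (s : seq bool) : nat :=
  find (fun i => c < T (take i s)) (iota 0 (size s).+1).

Definition exceeded (s : seq bool) : bool :=
  has (fun i => c < T (take i s)) (iota 0 (size s).+1).

Definition stopped (s : seq bool) : R := c^-1 * T (take (exceed_time s) s).

Lemma exceeded_rcons (s : seq bool) b :
  {in iota 0 (size s).+1, (fun i => c < T (take i (rcons s b))) =1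
                          (fun i => c < T (take i s))}.
Proof. by move=> i; rewrite mem_iota /= ltnS => le_is; rewrite take_rcons_le. Qed.

Lemma stopped_rcons_exceeded s b : exceeded s -> stopped (rcons s b) = stopped s.
Proof.
rewrite /exceeded => ex_s; rewrite /stopped /exceed_time iota_rcons find_cat.
rewrite (eq_in_has (@exceeded_rcons s b)) ex_s (eq_in_find (@exceeded_rcons s b)).
by rewrite take_rcons_le //; have := ex_s; rewrite has_find size_iota ltnS.
Qed.

Lemma stopped_not_exceeded s : ~~ exceeded s -> stopped s = c^-1 * T s.
Proof.
rewrite /exceeded has_find size_iota -leqNgt => le_find.
by rewrite /stopped take_oversize // (leq_trans _ le_find).
Qed.

Lemma stopped_rcons_not_exceeded s b :
  ~~ exceeded s -> stopped (rcons s b) = c^-1 * T (rcons s b).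
Proof.
rewrite /exceeded => nex_s; rewrite /stopped /exceed_time iota_rcons find_cat.
rewrite (eq_in_has (@exceeded_rcons s b)) (negbTE nex_s) size_iota.
by rewrite take_oversize // size_rcons leq_addr.
Qed.

Lemma stopped_supermartingale phi : forecasting_system phi -> supermartingale phi T ->
  supermartingale phi stopped.
Proof.
move=> phi_fs T_super s; have [I1_ge0 [le_I I2_le1]] := phi_fs s.
have cV_gt0 : 0 < c^-1 by rewrite invr_gt0.
have [ex_s|nex_s] := boolP (exceeded s).
  apply: upper_exp_le => // p _; rewrite !stopped_rcons_exceeded //.
  by rewrite -mulrDl addrC subrK mul1r.
apply: upper_exp_le => // p p_in.
rewrite !stopped_rcons_not_exceeded // stopped_not_exceeded //.
rewrite mulrCA [(1 - p) * _]mulrCA -mulrDr ler_pM2l //.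
exact: le_trans (upper_exp_ge _ _ _ p_in) (T_super s).
Qed.

Lemma stopped_ge0 : (forall s, 0 <= T s) -> forall s, 0 <= stopped s.
Proof. by move=> T_ge0 s; rewrite mulr_ge0 // invr_ge0 ltW. Qed.

Lemma stopped_ge1 (w : Omega) j : c < T (prefix w j) ->
  forall k, (j <= k)%N -> 1 <= stopped (prefix w k).
Proof.
move=> T_big k le_jk.
have ex_k : exceeded (prefix w k).
  apply/hasP; exists j; first by rewrite mem_iota size_prefix ltnS le_jk.
  by rewrite take_prefix.
have := nth_find 0%N ex_k; have := ex_k; rewrite /exceeded has_find size_iota => lt_find.
rewrite nth_iota // => T_stop.
by rewrite /stopped -(mulVf (lt0r_neq0 c_gt0)) ler_pM2l ?invr_gt0 // ltW.
Qed.

Lemma ville_inequality phi (G : set Omega) :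
  forecasting_system phi -> supermartingale phi T -> (forall s, 0 <= T s) ->
  T [::] = 1 -> (forall w, G w -> exists j, c < T (prefix w j)) ->
  (upper_prob phi G <= (c^-1)%:E)%E.
Proof.
move=> phi_fs T_super T_ge0 T_nil G_big; apply: ereal_inf_lbound.
exists stopped; last by rewrite /stopped T_nil mulr1.
split; first exact: stopped_supermartingale.
move=> w; have [Gw|nGw] := pselect (G w).
  rewrite mem_set //=; have [j T_big] := G_big w Gw.
  by apply: (@limn_einf_ge _ _ _ j) => k le_jk; rewrite lee_fin (stopped_ge1 T_big).
rewrite memNset //=; apply: (@limn_einf_ge _ _ _ 0%N) => k _.
by rewrite lee_fin stopped_ge0.
Qed.

End Ville.

Lemma nondecreasing_limit_gt (R : realType) (u : nat -> R) (l c : R) :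
  nondecreasing_seq u -> u @ \oo --> l -> (exists m, c < u m) <-> c < l.
Proof.
move=> u_nd u_l; split.
  case=> m lt_cu; apply: lt_le_trans lt_cu _.
  by have := nondecreasing_cvgn_le u_nd (cvgP _ u_l) m; rewrite (cvg_lim _ u_l).
by move=> lt_cl; have [N _ u_big] := cvgr_gt _ u_l _ lt_cl; exists N; exact: u_big N (leqnn N).
Qed.

Lemma unbounded_exceeds (R : realType) (u : nat -> R) :
  ~ (exists C, forall n, u n <= C) -> forall c, exists k, c < u k.
Proof.
move=> u_unb c; apply: contra_notP u_unb => no_k; exists c => k.
by rewrite leNgt; apply/negP => lt_cu; apply: no_k; exists k.
Qed.

Theorem proposition6p1 (R : realType) (phi : seq bool -> R * R) (omega : Omega) :
  forecasting_system phi -> ML_test_random phi omega -> ML_random phi omega.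
Proof.
move=> phi_fs omega_rand T [T_super [T_ge0 T_nil]] [q [q_rec [q_nd q_T]]].
have [//|T_unb] := pselect (exists C, forall n, T (prefix omega n) <= C).
pose A n s := exists m, ((2 ^ n)%:R : rat) < q s m.
have A_iff n s : A n s <-> 2%:R ^+ n < T s.
  rewrite -(nondecreasing_limit_gt _ _ (q_T s)); last first.
    by apply/nondecreasing_seqP => k; rewrite ler_rat.
  by split=> -[m lt_m]; exists m; move: lt_m; rewrite -(ltr_rat R) ratr_nat natrX.
exfalso; apply: (omega_rand A).
  split; first exact: rec_enum_exceed.
  move=> n; have pow_gt0 : 0 < 2%:R ^+ n :> R by rewrite exprn_gt0 ?ltr0n.
  apply: (ville_inequality pow_gt0 phi_fs T_super T_ge0 T_nil) => w [s [/A_iff T_big /= cyl_s]].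
  by exists (size s); rewrite cyl_s.
move=> n; have [k T_big] := unbounded_exceeds T_unb (2%:R ^+ n).
by exists (prefix omega k); split; [exact/A_iff | rewrite /cyl size_prefix].
Qed.
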